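(* If a regular curve $\gamma: I\to\mathbb{E}^4$ admits a generalized Bishop frame of type F, then it admits a generalized Bishop frame of type D.
   Context: A regular curve $\gamma: I\to\mathbb{E}^4$ ($I$ an open interval) is considered with arc-length parametrization; $\mathbb{T}=\gamma'$ is its unit tangent vector. A frame on $\gamma$ is an ordered orthonormal frame $(\mathbb{T},\mathbb{Z}_1,\mathbb{Z}_2,\mathbb{Z}_3)$ of smooth vector fields along $\gamma$ whose first vector is $\mathbb{T}$; it is identified with the smooth map $\mathbb{Z}: I\to O(4)$ whose rows are these vectors. Its coefficient matrix is the $\mathfrak{o}(4)$-valued function $X$ with $\mathbb{Z}'=X\mathbb{Z}$. A frame is of type D, resp. F, if, after possibly permuting $\mathbb{Z}_1,\mathbb{Z}_2,\mathbb{Z}_3$ (keeping $\mathbb{T}$ first), its coefficient matrix has the form, for some smooth functions $x_1,x_2,x_3$ (no sign conditions): Type D: $\begin{pmatrix}0&x_1&0&0\\-x_1&0&x_2&x_3\\0&-x_2&0&0\\0&-x_3&0&0\end{pmatrix}$; Type F: $\begin{pmatrix}0&x_1&0&0\\-x_1&0&x_2&0\\0&-x_2&0&x_3\\0&0&-x_3&0\end{pmatrix}$. *)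

From HB Require Import structures.
From mathcomp Require Import all_boot all_order all_fingroup all_algebra.
From mathcomp Require Import all_classical all_reals all_analysis.
Set Implicit Arguments. Unset Strict Implicit. Unset Printing Implicit Defensive.
Import Order.TTheory GRing.Theory Num.Theory.
Import numFieldNormedType.Exports.
Local Open Scope classical_set_scope.
Local Open Scope ring_scope.

Section Defs.
Variable R : realType.

Definition oint (a b : \bar R) : set R := [set x | (a < x%:E < b)%E].

Definition smooth_on (I : set R) (f : R -> R) : Prop :=
  forall (n : nat) (x : R), I x -> derivable (derive1n n f) x 1.

Definition comp (gamma : R -> 'rV[R]_4) (j : 'I_4) : R -> R :=
  fun t => gamma t 0 j.

Definition arclength_curve (I : set R) (gamma : R -> 'rV[R]_4) : Prop :=
  (forall j, smooth_on I (comp gamma j)) /\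
  (forall t, I t -> \sum_(j < 4) (derive1 (comp gamma j) t) ^+ 2 = 1).

Definition is_frame (I : set R) (gamma : R -> 'rV[R]_4) (Z : R -> 'M[R]_4)
  : Prop :=
  (forall i j, smooth_on I (fun t => Z t i j)) /\
  (forall t, I t -> Z t *m (Z t)^T = 1%:M) /\
  (forall t, I t -> forall j, Z t 0 j = derive1 (comp gamma j) t).

Definition shapeD (x1 x2 x3 : R) : 'M[R]_4 :=
  \matrix_(i, j)
    match nat_of_ord i, nat_of_ord j with
    | 0, 1 => x1 | 1, 0 => - x1
    | 1, 2 => x2 | 2, 1 => - x2
    | 1, 3 => x3 | 3, 1 => - x3
    | _, _ => 0 end.

Definition shapeF (x1 x2 x3 : R) : 'M[R]_4 :=
  \matrix_(i, j)
    match nat_of_ord i, nat_of_ord j with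
    | 0, 1 => x1 | 1, 0 => - x1
    | 1, 2 => x2 | 2, 1 => - x2
    | 2, 3 => x3 | 3, 2 => - x3
    | _, _ => 0 end.

(* The frame Z has, after a permutation s of Z1,Z2,Z3 (s fixes index 0,
   the tangent), a coefficient matrix of the given shape:
   (Zs)' = shape(x1,x2,x3) Zs on I, where Zs has rows Z_{s 0},...,Z_{s 3}. *)
Definition frame_of_shape (I : set R) (shape : R -> R -> R -> 'M[R]_4)
  (Z : R -> 'M[R]_4) : Prop :=
  exists s : 'S_4, s 0 = 0 /\
  exists x1 x2 x3 : R -> R,
    smooth_on I x1 /\ smooth_on I x2 /\ smooth_on I x3 /\
    forall t, I t -> forall i j : 'I_4,
      derive1 (fun u => Z u (s i) j) t =
      (shape (x1 t) (x2 t) (x3 t) *m (\matrix_(k, l) Z t (s k) l)) i j.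

Definition admits_frame_of_type (I : set R) (gamma : R -> 'rV[R]_4)
  (shape : R -> R -> R -> 'M[R]_4) : Prop :=
  exists Z : R -> 'M[R]_4, is_frame I gamma Z /\ frame_of_shape I shape Z.

End Defs.

From HB Require Import structures.
From mathcomp Require Import all_boot all_order all_fingroup all_algebra.
From mathcomp Require Import all_classical all_reals all_analysis.
From mathcomp Require Import ring.
Set Implicit Arguments. Unset Strict Implicit. Unset Printing Implicit Defensive.
Import Order.TTheory GRing.Theory Num.Theory.
Import numFieldNormedType.Exports.
Local Open Scope classical_set_scope.
Local Open Scope ring_scope.

(* Reorder Z1, Z2, Z3 so that a frame Z of type F satisfies
   Z' = F(x1, x2, x3) Z, let th be a primitive of x3, and rotate the last two
   vectors by the angle th: W = R(th) Z.  Since R(th)' = - x3 R(th) J, where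
   x3 J is exactly the x3-part of F, the rotation cancels it:
   W' = R(th) F(x1, x2, 0) Z = D(x1, x2 cos th, x2 sin th) W, because
   D(x1, x2 cos th, x2 sin th) R(th) = R(th) F(x1, x2, 0).  As th' = x3 is
   smooth, so are W and the new coefficients. *)

Section DerivableUpto.
Variables (R : realType) (I : set R).
Hypothesis I_open : open I.
Implicit Types f g : R -> R.

(* Finite orders make closure under products provable by induction. *)
Fixpoint derivable_upto (n : nat) f : Prop :=
  if n is m.+1 then
    (forall x, I x -> derivable f x 1) /\ derivable_upto m (derive1 f)
  else True.

Lemma derivable_upto_derivable n f : derivable_upto n.+1 f ->
  forall x, I x -> derivable f x 1.
Proof. by case. Qed.

Lemma derivable_uptoW n f : derivable_upto n.+1 f -> derivable_upto n f.
Proof. by elim: n f => [//|n IHn] f [fD /IHn]. Qed.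

Lemma smooth_onP f : smooth_on I f <-> forall n, derivable_upto n f.
Proof.
split=> [fS n | fS n x Ix].
  elim: n f fS => [//|n IHn] f fS; split; first exact: (fS 0%N).
  by apply: IHn => k x Ix; rewrite -derive1Sn; exact: fS.
elim: n f fS => [|n IHn] f fS; first exact: (derivable_upto_derivable (fS 1%N)).
by rewrite derive1Sn; apply: IHn => m; case: (fS m.+1).
Qed.

Lemma smooth_on_continuous f x : smooth_on I f -> I x -> {for x, continuous f}.
Proof.
move=> fS Ix; apply/differentiable_continuous/derivable1_diffP.
exact: (fS 0%N x Ix).
Qed.

Lemma derivable_upto_eq n f g : (forall x, I x -> f x = g x) ->
  derivable_upto n f -> derivable_upto n g.
Proof.
elim: n f g => [//|n IHn] f g fg [fD f'S].
have near_fg x : I x -> \forall y \near x, f y = g y.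
  by move=> Ix; apply: filterS (I_open Ix) => y /fg.
split=> [x Ix|]; first exact: near_eq_derivable (near_fg x Ix) (fD x Ix).
apply: IHn f'S => x Ix; rewrite !derive1E.
exact: near_eq_derive (near_fg x Ix).
Qed.

Lemma derivable_upto_is_derive n f f' :
  (forall x, I x -> is_derive x 1 f (f' x)) -> derivable_upto n f' ->
  derivable_upto n.+1 f.
Proof.
move=> ff' f'S; split=> [x /ff' [] //|].
by apply: derivable_upto_eq f'S => x /ff' ?; rewrite derive1E derive_val.
Qed.

Lemma derivable_upto_cst n (c : R) : derivable_upto n (cst c).
Proof.
elim: n c => [//|n IHn] c.
exact: (derivable_upto_is_derive (fun x _ => is_derive_cst c x 1) (IHn 0)).
Qed.

Lemma derivable_uptoD n f g : derivable_upto n f -> derivable_upto n g ->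
  derivable_upto n (f \+ g).
Proof.
elim: n f g => [//|n IHn] f g [fD f'S] [gD g'S].
have fgD x : I x -> is_derive x 1 (f \+ g) ((derive1 f \+ derive1 g) x).
  move=> Ix; rewrite /= !derive1E.
  exact: is_deriveD (derivableP (fD x Ix)) (derivableP (gD x Ix)).
exact: (derivable_upto_is_derive fgD (IHn _ _ f'S g'S)).
Qed.

Lemma derivable_uptoN n f :
  derivable_upto n f -> derivable_upto n (fun x => - f x).
Proof.
elim: n f => [//|n IHn] f [fD f'S].
have fND x : I x -> is_derive x 1 (fun x => - f x) (- derive1 f x).
  by move=> Ix; rewrite derive1E; exact: is_deriveN (derivableP (fD x Ix)).
exact: (derivable_upto_is_derive fND (IHn _ f'S)).
Qed.

Lemma derivable_uptoM n f g : derivable_upto n f -> derivable_upto n g ->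
  derivable_upto n (f \* g).
Proof.
elim: n f g => [//|n IHn] f g fS gS; have [[fD f'S] [gD g'S]] := (fS, gS).
have fgD x : I x -> is_derive x 1 (f \* g) ((derive1 f \* g \+ f \* derive1 g) x).
  move=> Ix; rewrite /= !derive1E.
  have fgDx := is_deriveM (derivableP (fD x Ix)) (derivableP (gD x Ix)).
  apply: is_derive_eq fgDx _.
  by rewrite addrC; congr (_ + _); exact: mulrC.
apply: (derivable_upto_is_derive fgD).
by apply: derivable_uptoD; apply: IHn => //; exact: derivable_uptoW.
Qed.

Lemma derivable_upto_sum n m (F : 'I_m -> R -> R) :
  (forall k, derivable_upto n (F k)) ->
  derivable_upto n (fun x => \sum_(k < m) F k x).
Proof.
elim: m F => [|m IHm] F FS.
  by apply: derivable_upto_eq (derivable_upto_cst n 0) => x _; rewrite big_ord0.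
have FmS := derivable_uptoD
  (IHm _ (fun k => FS (widen_ord (leqnSn m) k))) (FS ord_max).
by apply: derivable_upto_eq FmS => x _; rewrite big_ord_recr.
Qed.

Lemma derivable_upto_cos_sin n f : derivable_upto n f ->
  derivable_upto n (cos \o f) /\ derivable_upto n (sin \o f).
Proof.
elim: n f => [//|n IHn] f fS; have [fD f'S] := fS.
have [cS sS] := IHn _ (derivable_uptoW fS).
have cD x : I x -> is_derive x 1 (cos \o f) (- sin (f x) * derive1 f x).
  by move=> Ix; rewrite derive1E; exact: is_derive1_comp (derivableP (fD x Ix)).
have sD x : I x -> is_derive x 1 (sin \o f) (cos (f x) * derive1 f x).
  by move=> Ix; rewrite derive1E; exact: is_derive1_comp (derivableP (fD x Ix)).
split.
- exact: (derivable_upto_is_derive cD (derivable_uptoM (derivable_uptoN sS) f'S)).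
- exact: (derivable_upto_is_derive sD (derivable_uptoM cS f'S)).
Qed.
End DerivableUpto.

Section Primitive.
Variables (R : realType) (I : set R) (f : R -> R).
Hypotheses (I_open : open I) (I_itv : is_interval I).
Hypothesis f_cont : forall x, I x -> {for x, continuous f}.

Local Notation mu := (@lebesgue_measure R).
Let integral p t := (\int[mu]_(x in `[p, t]) f x)%R.

Lemma open_exists_lt x : I x -> exists2 p, I p & p < x.
Proof.
move=> /I_open /nbhs_ballP[e /= e_gt0 xeI].
exists (x - e / 2); last by rewrite ltrBlDr ltrDl divr_gt0.
apply: xeI; rewrite /ball /= opprB addrC subrK ger0_norm ?divr_ge0 ?ltW //.
by rewrite ltr_pdivrMr // ltr_pMr // ltr1n.
Qed.

Lemma open_exists_gt x : I x -> exists2 u, I u & x < u.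
Proof.
move=> /I_open /nbhs_ballP[e /= e_gt0 xeI].
exists (x + e / 2); last by rewrite ltrDl divr_gt0.
apply: xeI; rewrite /ball /= opprD addrA subrr sub0r normrN.
by rewrite ger0_norm ?divr_ge0 ?ltW // ltr_pdivrMr // ltr_pMr // ltr1n.
Qed.

Lemma integrable_segment p q : I p -> I q -> mu.-integrable `[p, q] (EFin \o f).
Proof.
move=> Ip Iq; apply: continuous_compact_integrable; first exact: segment_compact.
apply: continuous_in_subspaceT => z; rewrite inE /= in_itv /= => pzq.
exact/f_cont/(I_itv Ip Iq).
Qed.

Lemma integral_split p q t : I p -> I t -> p <= q -> q <= t ->
  integral p t = integral p q + integral q t.
Proof.
move=> Ip It pq qt.
have := Rintegral_itvB (integrable_segment Ip It) (x := q).
rewrite !bnd_simp => /(_ pq qt).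
rewrite Rintegral_itv_obnd_cbnd; last first.
  apply: integrableS (integrable_segment (I_itv Ip It (z := q) _) It) => //.
  - exact: subset_itv_oc_cc.
  - by rewrite pq.
by rewrite /integral => <-; rewrite addrC subrK.
Qed.

Lemma is_derive_integral p x : I p -> I x -> p < x ->
  is_derive x 1 (integral p) (f x).
Proof.
move=> Ip Ix px; have [u Iu xu] := open_exists_gt Ix.
have [fD f'E] :=
  continuous_FTC1_closed xu (integrable_segment Ip Iu) px (f_cont Ix).
by apply: DeriveDef; [exact: fD | rewrite -derive1E f'E].
Qed.

Lemma integral_shift p q t c : I p -> I q -> I t -> I c ->
  p <= q -> q <= t -> q <= c ->
  integral q t - integral q c = integral p t - integral p c.
Proof.
move=> Ip Iq It Ic pq qt qc.
rewrite (integral_split Ip It pq qt) (integral_split Ip Ic pq qc).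
by rewrite opprD addrACA subrr add0r.
Qed.

Lemma exists_primitive :
  exists F : R -> R, forall x, I x -> is_derive x 1 F (f x).
Proof.
have [[c Ic]|I0] := pselect (exists c, I c); last first.
  by exists id => x Ix; case: I0; exists x.
have I_min t : I t -> I (Num.min t c) by case: leP.
(* F t = integral p t - integral p c for every p in I below t and c (F_eq),
   so near x the function F differs from integral p by a constant. *)
pose below t := [set p | I p /\ p < Num.min t c].
pose base t := xget c (below t).
have base_spec t : I t -> below t (base t).
  move=> It; have [p Ip ptc] := open_exists_lt (I_min t It).
  exact: (@xgetI _ c (below t) p).
pose F t := integral (base t) t - integral (base t) c.
have F_eq p t : I p -> I t -> p <= t -> p <= c ->
    F t = integral p t - integral p c.
  move=> Ip It pt pc; have [Iq] := base_spec t It.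
  rewrite lt_min => /andP[qt qc].
  have Im : I (Num.min p (base t)) by case: leP.
  rewrite /F (integral_shift Im Iq It Ic _ (ltW qt) (ltW qc)); last first.
    by rewrite ge_min lexx orbT.
  by rewrite (integral_shift Im Ip It Ic _ pt pc) // ge_min lexx.
exists F => x Ix; have [p Ip] := open_exists_lt (I_min x Ix).
rewrite lt_min => /andP[px pc].
have := is_deriveB (is_derive_integral Ip Ix px)
  (is_derive_cst (integral p c) x 1).
rewrite subr0; apply: near_eq_is_derive.
near=> y; rewrite (F_eq p y) ?(ltW pc) //.
- by near: y; exact: I_open.
- by apply: ltW; near: y; exact: lt_nbhsr.
Unshelve. all: by end_near. Qed.
End Primitive.

Section OpenInterval.
Variables (R : realType) (a b : \bar R).

Lemma oint_open : open (oint a b).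
Proof.
have -> : oint a b = [set x | (a < x%:E)%E] `&` [set x | (x%:E < b)%E].
  by apply/seteqP; split=> x /andP.
by apply: openI; [exact: open_ereal_gt | exact: open_ereal_lt].
Qed.

Lemma oint_is_interval : is_interval (oint a b).
Proof.
move=> x y /andP[ax _] /andP[_ yb] z /andP[xz zy]; apply/andP; split.
- by rewrite (lt_le_trans ax) ?lee_fin.
- by rewrite (le_lt_trans _ yb) ?lee_fin.
Qed.
End OpenInterval.

Section MatrixDerivative.
Variable R : realType.

Lemma is_derive_mxP m n (A : R -> 'M[R]_(m, n)) (t : R) (dA : 'M[R]_(m, n)) :
  is_derive t 1 A dA <-> forall i j, is_derive t 1 (fun u => A u i j) (dA i j).
Proof.
split=> [[AD <-] i j | AD].
  have /derivable_mxP AijD := AD.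
  by apply: DeriveDef; [exact: AijD | rewrite derive_mx // mxE].
have AD' : derivable A t 1 by apply/derivable_mxP => i j; case: (AD i j).
apply: DeriveDef => //; rewrite derive_mx //; apply/matrixP => i j.
by rewrite mxE derive_val.
Qed.

Lemma is_derive_mulmx m n p (A : R -> 'M[R]_(m, n)) (B : R -> 'M[R]_(n, p))
    (t : R) dA dB :
  is_derive t 1 A dA -> is_derive t 1 B dB ->
  is_derive t 1 (fun u => A u *m B u) (dA *m B t + A t *m dB).
Proof.
move=> /is_derive_mxP AD /is_derive_mxP BD; apply/is_derive_mxP => i j.
have -> : (fun u => (A u *m B u) i j) = \sum_(k < n) (fun u => A u i k * B u k j).
  by apply/funext => u; rewrite mxE fct_sumE.
apply: is_derive_eq (is_derive_sum (fun k => is_deriveM (AD i k) (BD k j))) _.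
rewrite !mxE -big_split /=; apply: eq_bigr => k _.
by rewrite addrC; congr (_ + _); exact: mulrC.
Qed.
End MatrixDerivative.

Section Rotation.
Variable R : realType.

Definition rot23 (th : R) : 'M[R]_4 := \matrix_(i, j)
  match nat_of_ord i, nat_of_ord j with
  | 0, 0 | 1, 1 => 1
  | 2, 2 | 3, 3 => cos th
  | 2, 3 => - sin th
  | 3, 2 => sin th
  | _, _ => 0
  end.

Ltac mx4_entries := apply/matrixP => -[[|[|[|[|//]]]] ?] [[|[|[|[|//]]]] ?];
  rewrite !(mxE, big_ord_recr, big_ord0) /=.

Lemma rot23_orthogonal th : rot23 th *m (rot23 th)^T = 1%:M.
Proof.
have cs := cos2Dsin2 th.
by mx4_entries; first [ring | rewrite -cs; ring].
Qed.

Lemma shapeD_rot23 x1 x2 th :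
  shapeD x1 (x2 * cos th) (x2 * sin th) *m rot23 th = rot23 th *m shapeF x1 x2 0.
Proof.
have cs := cos2Dsin2 th.
by mx4_entries; first [ring | rewrite -cs; ring].
Qed.

Lemma shapeF_decomp x1 x2 x3 :
  shapeF x1 x2 x3 = shapeF x1 x2 0 + x3 *: shapeF 0 0 1 :> 'M[R]_4.
Proof. by mx4_entries; ring. Qed.

Lemma is_derive_rot23 (th : R -> R) (t dth : R) : is_derive t 1 th dth ->
  is_derive t 1 (fun u => rot23 (th u)) (- dth *: (rot23 (th t) *m shapeF 0 0 1)).
Proof.
move=> thD; apply/is_derive_mxP => i j.
have cD : is_derive t 1 (cos \o th) (- sin (th t) * dth).
  exact: is_derive1_comp (is_derive_cos _) thD.
have sD : is_derive t 1 (sin \o th) (cos (th t) * dth).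
  exact: is_derive1_comp (is_derive_sin _) thD.
have kD (k : R) : is_derive t 1 (cst k) 0 := is_derive_cst k t 1.
under eq_fun do rewrite mxE.
case: i j => [[|[|[|[|//]]]] ?] [[|[|[|[|//]]]] ?] /=.
all: rewrite !(mxE, big_ord_recr, big_ord0) /=.
all: first [ apply: is_derive_eq (kD _) _ | apply: is_derive_eq cD _
           | apply: is_derive_eq sD _ | apply: is_derive_eq (is_deriveN sD) _ ].
all: ring.
Qed.
End Rotation.

Section Frames.
Variables (R : realType) (I : set R) (gamma : R -> 'rV[R]_4).

Definition shape_ode (shape : R -> R -> R -> 'M[R]_4) (P : R -> 'M[R]_4)
    (x1 x2 x3 : R -> R) :=
  [/\ smooth_on I x1, smooth_on I x2, smooth_on I x3 &
      forall t, I t -> is_derive t 1 P (shape (x1 t) (x2 t) (x3 t) *m P t)].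

Lemma is_frame_permuted (Z : R -> 'M[R]_4) (s : 'S_4) : s 0 = 0 ->
  is_frame I gamma Z -> is_frame I gamma (fun t => \matrix_(k, l) Z t (s k) l).
Proof.
move=> s0 [Z_smooth [Z_orth Z_tangent]]; split; [|split].
- by move=> i j; under eq_fun do rewrite mxE; exact: Z_smooth.
- move=> t It; apply/matrixP => k k'.
  have := congr1 (fun M : 'M[R]_4 => M (s k) (s k')) (Z_orth t It).
  rewrite !mxE (inj_eq perm_inj) => <-; apply: eq_bigr => l _; rewrite !mxE //.
- by move=> t It j; rewrite mxE s0; exact: Z_tangent.
Qed.

Lemma admits_frame_of_typeP shape : admits_frame_of_type I gamma shape <->
  exists P x1 x2 x3, is_frame I gamma P /\ shape_ode shape P x1 x2 x3.
Proof.
split=> [[Z [Z_frame [s [s0 [x1 [x2 [x3 [x1S [x2S [x3S Z_ode]]]]]]]]]] |].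
  exists (fun t => \matrix_(k, l) Z t (s k) l), x1, x2, x3.
  have P_frame := is_frame_permuted s0 Z_frame.
  split=> //; split=> // t It; apply/is_derive_mxP => i j.
  apply: DeriveDef.
    by case: P_frame => P_smooth _; exact: (P_smooth i j 0%N t It).
  by rewrite -derive1E -Z_ode //; under eq_fun do rewrite mxE.
move=> [P [x1 [x2 [x3 [P_frame [x1S x2S x3S P_ode]]]]]].
exists P; split=> //; exists 1%g; split; first by rewrite perm1.
exists x1, x2, x3; do 3!split=> //; move=> t It i j.
have -> : \matrix_(k, l) P t ((1%g : 'S_4) k) l = P t.
  by apply/matrixP => k l; rewrite mxE perm1.
under eq_fun do rewrite perm1.
by rewrite derive1E; have /is_derive_mxP/(_ i j)[_ ->] := P_ode t It.
Qed.
End Frames.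

Section RotatedFrame.
Variables (R : realType) (I : set R) (gamma : R -> 'rV[R]_4).
Hypothesis I_open : open I.
Variables (P : R -> 'M[R]_4) (x1 x2 x3 th : R -> R).
Hypothesis P_frame : is_frame I gamma P.
Hypothesis P_ode : shape_ode I (@shapeF R) P x1 x2 x3.
Hypothesis th_primitive : forall t, I t -> is_derive t 1 th (x3 t).

Definition rotated_frame t := rot23 (th t) *m P t.

Lemma derivable_upto_angle n : derivable_upto I n th.
Proof.
case: P_ode => _ _ /smooth_onP x3S _.
exact: derivable_uptoW (derivable_upto_is_derive I_open th_primitive (x3S n)).
Qed.

Lemma derivable_upto_rot23 n i j : derivable_upto I n (fun t => rot23 (th t) i j).
Proof.
have [cS sS] := derivable_upto_cos_sin I_open (derivable_upto_angle n).
under eq_fun do rewrite mxE.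
case: i j => [[|[|[|[|//]]]] ?] [[|[|[|[|//]]]] ?] /=.
all: first [ exact: (derivable_upto_cst I_open) | exact: cS | exact: sS
           | exact: (derivable_uptoN I_open sS) ].
Qed.

Lemma rotated_frame_row0 t j : rotated_frame t 0 j = P t 0 j.
Proof.
rewrite mxE big_ord_recl big1 => [|k _]; last by rewrite mxE mul0r.
by rewrite mxE mul1r addr0.
Qed.

Lemma is_frame_rotated : is_frame I gamma rotated_frame.
Proof.
case: P_frame => P_smooth [P_orth P_tangent]; split; [|split].
- move=> i j; apply/smooth_onP => n; under eq_fun do rewrite mxE.
  apply: (derivable_upto_sum I_open) => k.
  apply: (derivable_uptoM I_open); first exact: derivable_upto_rot23.
  by move/smooth_onP: (P_smooth k j).
- move=> t It; rewrite /rotated_frame trmx_mul mulmxA -(mulmxA (rot23 _)).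
  by rewrite P_orth // mulmx1 rot23_orthogonal.
- by move=> t It j; rewrite rotated_frame_row0 P_tangent.
Qed.

Lemma rotated_frame_ode : shape_ode I (@shapeD R) rotated_frame
  x1 (fun t => x2 t * cos (th t)) (fun t => x2 t * sin (th t)).
Proof.
case: P_ode => x1S /smooth_onP x2S _ P'.
have cS_sS n := derivable_upto_cos_sin I_open (derivable_upto_angle n).
split; first exact: x1S.
- by apply/smooth_onP => n; exact: derivable_uptoM (x2S n) (cS_sS n).1.
- by apply/smooth_onP => n; exact: derivable_uptoM (x2S n) (cS_sS n).2.
- move=> t It.
  have WD := is_derive_mulmx (is_derive_rot23 (th_primitive It)) (P' t It).
  apply: is_derive_eq WD _.
  rewrite /rotated_frame [shapeF (x1 t) _ _]shapeF_decomp.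
  rewrite [in RHS]mulmxA shapeD_rot23 mulmxDl mulmxDr -scalemxAl -!scalemxAr.
  rewrite !mulmxA scaleNr mulNmx -scalemxAl.
  by rewrite [_ + x3 t *: _]addrC addKr.
Qed.
End RotatedFrame.

Theorem corollary1 (R : realType) (a b : \bar R) (gamma : R -> 'rV[R]_4) :
  (a < b)%E ->
  arclength_curve (oint a b) gamma ->
  admits_frame_of_type (oint a b) gamma (@shapeF R) ->
  admits_frame_of_type (oint a b) gamma (@shapeD R).
Proof.
move=> _ _ /admits_frame_of_typeP[P [x1 [x2 [x3 [P_frame P_ode]]]]].
have I_open := @oint_open R a b.
have [th th_primitive] : exists th : R -> R,
    forall t, oint a b t -> is_derive t 1 th (x3 t).
  apply: exists_primitive I_open (@oint_is_interval R a b) _ => x Ix.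
  by case: P_ode => _ _ x3S _; exact: smooth_on_continuous x3S Ix.
apply/admits_frame_of_typeP; exists (rotated_frame P th), x1,
  (fun t => x2 t * cos (th t)), (fun t => x2 t * sin (th t)).
split; first exact: (is_frame_rotated I_open P_frame P_ode th_primitive).
exact: (rotated_frame_ode I_open P_ode th_primitive).
Qed.
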